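(* Let $G$, $\mathcal{D}_G$, $\mathcal{A}_k$ and $\mathcal{Q}(\vec q)$ be as in the context. For every $\vec q\in\mathbb{Z}^c$, the set $\mathcal{Q}(\vec q)$ is either empty or consists of a single point.
   Context: Let $G$ be a finite connected planar graph with $n$ vertices and $m$ edges, such that every edge of $G$ lies on at least one cycle of $G$, and fix a planar embedding of $G$. Let $F_1,\dots,F_c$ ($c=m-n+1$) be the bounded faces of the embedding; each edge borders exactly two faces (possibly one of them the unbounded one). For $k\neq \ell$ let $m_{k\ell}$ be the number of edges bordering both $F_k$ and $F_\ell$, and let $m_k$ be the number of edges bordering $F_k$ and the unbounded face. Define $\mathcal{D}_G=\{\vec\varepsilon\in\mathbb{R}^c: |\varepsilon_k|\le 1 \text{ whenever } m_k>0,\ |\varepsilon_k-\varepsilon_\ell|\le 1\text{ whenever } m_{k\ell}>0\}$, and for $k=1,\dots,c$ the function $\mathcal{A}_k:\mathcal{D}_G\to\mathbb{R}$, $\mathcal{A}_k(\vec\varepsilon)=m_k\arcsin(\varepsilon_k)+\sum_{\ell\neq k}m_{k\ell}\arcsin(\varepsilon_k-\varepsilon_\ell)$ (the sum of the angle differences around the counterclockwise boundary of $F_k$ induced by loop flows $\varepsilon_1,\dots,\varepsilon_c$ on the faces). For $\vec q=(q_1,\dots,q_c)\in\mathbb{Z}^c$ let $\mathcal{Q}(\vec q)=\{\vec\varepsilon\in\mathcal{D}_G:\mathcal{A}_k(\vec\varepsilon)=2\pi q_k\text{ for all }k\}$. *)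

From HB Require Import structures.
From mathcomp Require Import all_boot all_order all_algebra all_fingroup.
From mathcomp Require Import all_classical all_reals all_analysis.
Set Implicit Arguments. Unset Strict Implicit. Unset Printing Implicit Defensive.
Import Order.TTheory GRing.Theory Num.Theory.

(* ---------- Combinatorial maps (planar embeddings of graphs) ----------
   D : finite set of darts (half-edges); alpha : the involution pairing the two
   darts of an edge; sigma : rotation (cyclic order of darts around each vertex).
   vertices = sigma-orbits, edges = alpha-orbits, faces = phi-orbits, where
   phi = alpha then sigma (the face-tracing permutation). *)
Section Maps.
Variables (D : finType) (alpha sigma : {perm D}).

Definition phi : {perm D} := (alpha * sigma)%g.

Definition vertices := porbits sigma.
Definition edges := porbits alpha.
Definition faces := porbits phi.

Definition is_map := forall d, alpha (alpha d) = d /\ alpha d != d.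

Definition graph_rel : rel D := fun x y => (y \in porbit sigma x) || (y == alpha x).

Definition map_connected := forall x y, connect graph_rel x y.

Definition no_loops := forall d, alpha d \notin porbit sigma d.
Definition no_multi_edges := forall d d',
  d' \in porbit sigma d -> porbit sigma (alpha d) = porbit sigma (alpha d') -> d = d'.

(* genus 0 (Euler's formula V - E + F = 2 for the connected map):
   the rotation system is a planar embedding *)
Definition planar_map := (#|vertices| + #|faces| = #|edges| + 2)%N.

Definition graph_rel_minus (e : {set D}) : rel D :=
  fun x y => (y \in porbit sigma x) || ((y == alpha x) && (x \notin e)).

Definition edge_on_cycle (d : D) := connect (graph_rel_minus (porbit alpha d)) d (alpha d).

Definition every_edge_on_cycle := forall d, edge_on_cycle d.

Definition borders (e f : {set D}) : bool := ~~ [disjoint e & f].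

Definition n_common_edges (f g : {set D}) : nat :=
  #|[set e in edges | borders e f && borders e g]|.

End Maps.

Local Open Scope ring_scope.
Section Flows.
Variables (R : realType) (D : finType) (alpha : {perm D}).
Variables (c : nat) (F : 'I_c -> {set D}) (F0 : {set D}).

Definition mkl (k l : 'I_c) : nat := n_common_edges alpha (F k) (F l).
Definition mk (k : 'I_c) : nat := n_common_edges alpha (F k) F0.

Definition in_DG (eps : 'I_c -> R) : Prop :=
  (forall k, (0 < mk k)%N -> `|eps k| <= 1) /\
  (forall k l, k != l -> (0 < mkl k l)%N -> `|eps k - eps l| <= 1).

Definition A_k (eps : 'I_c -> R) (k : 'I_c) : R :=
  (mk k)%:R * asin (eps k) + \sum_(l < c | l != k) (mkl k l)%:R * asin (eps k - eps l).

Definition Qset (q : 'I_c -> int) (eps : 'I_c -> R) : Prop :=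
  in_DG eps /\ forall k, A_k eps k = 2 * pi * (q k)%:~R.

End Flows.

From HB Require Import structures.
From mathcomp Require Import all_boot all_order all_algebra all_fingroup.
From mathcomp Require Import all_classical all_reals all_analysis.
From mathcomp Require Import lra.
Import Order.TTheory GRing.Theory Num.Theory.
Set Implicit Arguments. Unset Strict Implicit. Unset Printing Implicit Defensive.
Local Open Scope ring_scope.

(* A maximum principle.  Given eps1, eps2 in Q(q), suppose the gap
   eps1 - eps2 attains a positive maximum at face k.  As asin is increasing,
   every summand of A_k(eps1) - A_k(eps2) = 0 is nonnegative, hence zero: F_k
   does not border the unbounded face, and each neighbour of F_k attains the
   same maximal gap.  Spreading this through the connected map eventually
   reaches the unbounded face, a contradiction.  By symmetry eps1 = eps2. *)

Section ArcSine.
Variable R : realType.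
Implicit Types x y : R.

Lemma asin_itv x : x \in `[-1, 1] -> asin x \in `[- (pi / 2), pi / 2].
Proof.
by rewrite !in_itv /= => x1; rewrite asin_geNpi2 ?asin_lepi2.
Qed.

Lemma ler_asin : {in `[-1, 1] &, {mono @asin R : x y / x <= y}}.
Proof.
apply: le_mono_in => x y x1 y1 xy.
by rewrite -ltr_sin ?asin_itv // !asinK.
Qed.

Lemma asin_inj : {in `[-1, 1] &, injective (@asin R)}.
Proof. exact: inc_inj_in ler_asin. Qed.

Lemma norm_le1_itv x : `|x| <= 1 -> x \in `[-1, 1].
Proof. by rewrite in_itv /= -ler_norml. Qed.

Lemma nat_mul_asinB_ge0 (m : nat) x y :
  ((0 < m)%N -> `|x| <= 1) -> ((0 < m)%N -> `|y| <= 1) -> y <= x ->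
  0 <= m%:R * (asin x - asin y).
Proof.
case: (posnP m) => [-> _ _ _|m_gt0 x1 y1 yx]; first by rewrite mul0r.
have x1' := norm_le1_itv (x1 isT); have y1' := norm_le1_itv (y1 isT).
by rewrite mulr_ge0 // subr_ge0 ler_asin.
Qed.

Lemma nat_mul_asinB_eq0 (m : nat) x y :
  (0 < m)%N -> `|x| <= 1 -> `|y| <= 1 ->
  m%:R * (asin x - asin y) = 0 -> x = y.
Proof.
move=> m_gt0 /norm_le1_itv x1 /norm_le1_itv y1 /eqP.
rewrite mulf_eq0 pnatr_eq0 gtn_eqF //= subr_eq0 => /eqP.
exact: asin_inj.
Qed.

End ArcSine.

Section AngleSumGap.
Variables (R : realType) (D : finType) (alpha : {perm D}).
Variables (c : nat) (F : 'I_c -> {set D}) (F0 : {set D}).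
Variables (eps1 eps2 : 'I_c -> R) (k : 'I_c).
Hypotheses (DG1 : in_DG alpha F F0 eps1) (DG2 : in_DG alpha F F0 eps2).
Hypothesis Ak_eq : A_k alpha F F0 eps1 k = A_k alpha F F0 eps2 k.
Hypothesis gap_max : forall l, eps1 l - eps2 l <= eps1 k - eps2 k.
Hypothesis gap_gt0 : 0 < eps1 k - eps2 k.

Local Notation outer_term :=
  ((mk alpha F F0 k)%:R * (asin (eps1 k) - asin (eps2 k))).
Local Notation inner_term l :=
  ((mkl alpha F k l)%:R * (asin (eps1 k - eps1 l) - asin (eps2 k - eps2 l))).

Lemma A_kB : A_k alpha F F0 eps1 k - A_k alpha F F0 eps2 k =
  outer_term + \sum_(l < c | l != k) inner_term l.
Proof.
rewrite /A_k opprD addrACA -mulrBr -sumrB.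
by under eq_bigr do rewrite -mulrBr.
Qed.

Lemma outer_term_ge0 : 0 <= outer_term.
Proof.
apply: nat_mul_asinB_ge0; [exact: DG1.1|exact: DG2.1|have := gap_gt0; lra].
Qed.

Lemma inner_term_ge0 l : l != k -> 0 <= inner_term l.
Proof.
rewrite eq_sym => kl; have := gap_max l => gap_l.
apply: nat_mul_asinB_ge0; [exact: DG1.2|exact: DG2.2|lra].
Qed.

Lemma gap_terms_eq0 : outer_term = 0 /\ forall l, l != k -> inner_term l = 0.
Proof.
have sum_ge0 : 0 <= \sum_(l < c | l != k) inner_term l.
  by apply: sumr_ge0 => l; apply: inner_term_ge0.
have /eqP := A_kB; rewrite Ak_eq subrr eq_sym paddr_eq0 ?outer_term_ge0 //.
case/andP => /eqP -> /eqP sum_eq0; split=> // l lk.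
exact: (psumr_eq0P inner_term_ge0 sum_eq0).
Qed.

Lemma argmax_gap_mk_eq0 : mk alpha F F0 k = 0%N.
Proof.
have [//|mk_gt0] := posnP (mk alpha F F0 k).
have := nat_mul_asinB_eq0 mk_gt0 (DG1.1 k mk_gt0) (DG2.1 k mk_gt0).
move=> /(_ gap_terms_eq0.1).
by move: gap_gt0 => /[swap] ->; rewrite subrr ltxx.
Qed.

Lemma argmax_gap_neighbour l : l != k -> (0 < mkl alpha F k l)%N ->
  eps1 l - eps2 l = eps1 k - eps2 k.
Proof.
move=> lk mkl_gt0; have kl : k != l by rewrite eq_sym.
have := nat_mul_asinB_eq0 mkl_gt0 (DG1.2 k l kl mkl_gt0) (DG2.2 k l kl mkl_gt0).
move=> /(_ (gap_terms_eq0.2 l lk)); lra.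
Qed.

End AngleSumGap.

Section Faces.
Variables (D : finType) (alpha sigma : {perm D}).
Local Notation phi := (phi alpha sigma).

Lemma face_porbit f x : f \in faces alpha sigma -> x \in f -> f = porbit phi x.
Proof. by move=> /imsetP[y _ ->] xy; apply/esym/eqP; rewrite eq_porbit_mem. Qed.

Lemma face_phi_closed f x : f \in faces alpha sigma -> x \in f -> phi x \in f.
Proof.
move=> ff xf; rewrite (face_porbit ff xf).
by have := mem_porbit phi 1 x; rewrite expg1.
Qed.

Lemma n_common_edges_gt0 (f g : {set D}) x :
  x \in f -> alpha x \in g -> (0 < n_common_edges alpha f g)%N.
Proof.
move=> xf axg; rewrite /n_common_edges card_gt0; apply/set0Pn.
exists (porbit alpha x); rewrite inE imset_f //=.
have ax : alpha x \in porbit alpha x.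
  by have := mem_porbit alpha 1 x; rewrite expg1.
apply/andP; split; apply/negP => dis.
  by have := disjointFr dis (porbit_id alpha x); rewrite xf.
by have := disjointFr dis ax; rewrite axg.
Qed.

Lemma map_connected_invariant (P : pred D) :
  is_map alpha -> map_connected alpha sigma ->
  (forall x, P x -> P (alpha x)) -> (forall x, P x -> P (phi x)) ->
  forall x y, P x -> P y.
Proof.
move=> map_alpha conn P_alpha P_phi.
have P_sigma x : P x -> P (sigma x).
  by rewrite -[x in sigma x](map_alpha x).1 -permM => /P_alpha /P_phi.
have P_step x y : graph_rel alpha sigma x y -> P x -> P y.
  case/orP=> [/porbitP[i ->]|/eqP -> /P_alpha //].
  by elim: i => [|i IH] Px; rewrite ?expg0 ?perm1 // expgSr permM P_sigma ?IH.
move=> x y; have /connectP[p x_p ->] := conn x y.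
by elim: p x x_p => [//|z p IH] x /= /andP[xz z_p] /(P_step _ _ xz) /IH; apply.
Qed.

End Faces.

Section OuterFace.
Variables (D : finType) (alpha sigma : {perm D}).
Variables (c : nat) (F : 'I_c -> {set D}) (F0 : {set D}).
Hypotheses (map_alpha : is_map alpha) (conn : map_connected alpha sigma).
Hypothesis F0_face : F0 \in faces alpha sigma.
Hypothesis F_bounded :
  forall f, (f \in faces alpha sigma) && (f != F0) <-> exists k, F k = f.

Lemma F_face k : F k \in faces alpha sigma.
Proof. by have /andP[] := (F_bounded (F k)).2 (ex_intro _ k erefl). Qed.

Lemma F_neq_F0 k : F k != F0.
Proof. by have /andP[] := (F_bounded (F k)).2 (ex_intro _ k erefl). Qed.

(* The darts of the faces in S are closed under alpha and phi, so by
   connectivity they include the darts of F0. *)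
Lemma adjacency_closed_touches_outer (S : pred 'I_c) k : S k ->
  (forall l l', S l -> l != l' -> (0 < mkl alpha F l l')%N -> S l') ->
  exists2 l, S l & (0 < mk alpha F F0 l)%N.
Proof.
move=> Sk S_closed.
have [/existsP[l /andP[Sl mk_gt0]]|/existsPn no_outer] :=
  boolP [exists l, S l && (0 < mk alpha F F0 l)%N]; first by exists l.
exfalso.
pose P x := [exists l, S l && (x \in F l)].
have P_phi x : P x -> P (phi alpha sigma x).
  case/existsP=> l /andP[Sl xl]; apply/existsP; exists l.
  by rewrite Sl (face_phi_closed (F_face l)).
have P_alpha x : P x -> P (alpha x).
  case/existsP=> l /andP[Sl xl].
  have g_face : porbit (phi alpha sigma) (alpha x) \in faces alpha sigma.
    exact: imset_f.
  have ax_g := porbit_id (phi alpha sigma) (alpha x).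
  have [g_outer|g_inner] := eqVneq (porbit (phi alpha sigma) (alpha x)) F0.
    have := no_outer l; rewrite Sl (n_common_edges_gt0 xl) //.
    by rewrite -g_outer.
  have [l' Fl'] := (F_bounded _).1 (introT andP (conj g_face g_inner)).
  apply/existsP; exists l'; rewrite Fl' ax_g andbT.
  have [<-|ll'] := eqVneq l l'; first exact: Sl.
  by apply: S_closed ll' _; rewrite // (n_common_edges_gt0 xl) // Fl'.
have [x _ Fk_x] := imsetP (F_face k).
have [w _ F0_w] := imsetP F0_face.
have /existsP[l /andP[_ w_Fl]] : P w.
  apply: (map_connected_invariant map_alpha conn P_alpha P_phi (x := x)).
  by apply/existsP; exists k; rewrite Sk Fk_x porbit_id.
by have := F_neq_F0 l; rewrite (face_porbit (F_face l) w_Fl) F0_w eqxx.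
Qed.

Lemma Qset_gap_le0 (R : realType) q (eps1 eps2 : 'I_c -> R) k :
  Qset alpha F F0 q eps1 -> Qset alpha F F0 q eps2 -> eps1 k - eps2 k <= 0.
Proof.
move=> [DG1 A1] [DG2 A2]; rewrite leNgt; apply/negP => gap_k_gt0.
have Ak_eq l : A_k alpha F F0 eps1 l = A_k alpha F F0 eps2 l by rewrite A1 A2.
have [m _ m_max] := @arg_maxP _ R _ k predT (fun l => eps1 l - eps2 l) isT.
pose top l := eps1 l - eps2 l == eps1 m - eps2 m.
have top_max l : top l -> forall l', eps1 l' - eps2 l' <= eps1 l - eps2 l.
  by move=> /eqP -> l'; apply: m_max.
have top_gt0 l : top l -> 0 < eps1 l - eps2 l.
  by move=> /eqP ->; apply: lt_le_trans gap_k_gt0 (m_max k isT).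
have [l top_l] : exists2 l, top l & (0 < mk alpha F F0 l)%N.
  apply: (@adjacency_closed_touches_outer top m (eqxx _)).
  move=> l l' top_l ll' mkl_gt0; rewrite /top.
  have l'l : l' != l by rewrite eq_sym.
  by rewrite (argmax_gap_neighbour DG1 DG2 (Ak_eq l) (top_max l top_l)
                                   (top_gt0 l top_l) l'l).
by rewrite (argmax_gap_mk_eq0 DG1 DG2 (Ak_eq l) (top_max l top_l)
                              (top_gt0 l top_l)).
Qed.

End OuterFace.

Theorem theorem1 (R : realType) (D : finType) (alpha sigma : {perm D})
  (c : nat) (F : 'I_c -> {set D}) (F0 : {set D}) :
  is_map alpha ->
  map_connected alpha sigma ->
  no_loops alpha sigma ->
  no_multi_edges alpha sigma ->
  planar_map alpha sigma ->
  every_edge_on_cycle alpha sigma ->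
  (* F0 is the unbounded face; F_1..F_c enumerate the bounded faces *)
  F0 \in faces alpha sigma ->
  injective F ->
  (forall f, (f \in faces alpha sigma) && (f != F0) <-> exists k, F k = f) ->
  forall (q : 'I_c -> int) (eps1 eps2 : 'I_c -> R),
    Qset alpha F F0 q eps1 -> Qset alpha F F0 q eps2 -> eps1 = eps2.
Proof.
move=> map_alpha conn _ _ _ _ F0_face _ F_bounded q eps1 eps2 Q1 Q2.
apply: funext => k.
have := Qset_gap_le0 map_alpha conn F0_face F_bounded k Q1 Q2.
have := Qset_gap_le0 map_alpha conn F0_face F_bounded k Q2 Q1.
lra.
Qed.
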